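(* Let $\mathbb{X}\subseteq\mathbb{P}^2$ be a $\Bbbk$-configuration of type $(1,2,\dots,s)$ with $s\ge2$. Then exactly one of the following holds: (i) There are exactly $s+1$ lines containing $s$ points of $\mathbb{X}$, and $\mathbb{X}$ is precisely the set of pairwise intersection points of these $s+1$ lines. (ii) There are exactly $s$ lines containing $s$ points of $\mathbb{X}$; moreover there exist subsets $\mathbb{X}_1,\dots,\mathbb{X}_s$ and lines $\mathbb{L}_1,\dots,\mathbb{L}_s$ defining $\mathbb{X}$ as a $\Bbbk$-configuration of type $(1,\dots,s)$ such that $\mathbb{L}_1,\dots,\mathbb{L}_s$ are exactly these $s$ lines, and for each $i=1,\dots,s$ the set $\mathbb{X}\cap\mathbb{L}_i$ consists of the $s-1$ points $\mathbb{L}_i\cap\mathbb{L}_j$ ($j\ne i$) together with a single point $P_i$ not lying on any $\mathbb{L}_j$ with $j\neq i$. (iii) There are $r$ lines containing $s$ points of $\mathbb{X}$ with $1\le r<s$; moreover there exist subsets $\mathbb{X}_1,\dots,\mathbb{X}_s$ and lines $\mathbb{L}_1,\dots,\mathbb{L}_s$ defining $\mathbb{X}$ as a $\Bbbk$-configuration of type $(1,\dots,s)$ such that none of these $r$ lines passes through the unique point of $\mathbb{X}_1$.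
   Context: $\Bbbk$ is an algebraically closed field. A $\Bbbk$-configuration of type $(d_1,\dots,d_s)$ is a finite set $\mathbb{X}\subseteq\mathbb{P}^2$ for which there exist integers $1\le d_1<\cdots<d_s$, subsets $\mathbb{X}_1,\dots,\mathbb{X}_s$ of $\mathbb{X}$ and distinct lines $\mathbb{L}_1,\dots,\mathbb{L}_s\subseteq\mathbb{P}^2$ such that (1) $\mathbb{X}=\bigcup_{i=1}^s\mathbb{X}_i$; (2) $|\mathbb{X}_i|=d_i$ and $\mathbb{X}_i\subseteq\mathbb{L}_i$ for each $i$; (3) for $1<i\le s$, $\mathbb{L}_i$ contains no point of $\mathbb{X}_j$ for any $j<i$. We say $\mathbb{X}$ is defined by these subsets and lines; such defining data need not be unique. *)

From HB Require Import structures.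
From mathcomp Require Import all_boot all_order all_algebra.
Set Implicit Arguments. Unset Strict Implicit. Unset Printing Implicit Defensive.
Import GRing.Theory.
Local Open Scope ring_scope.

(* Homogeneous triples normalized so that the first nonzero coordinate is 1:
   these are canonical representatives of points of P^2 (and, dually, of
   lines of P^2).  Leibniz equality = equality in P^2. *)
Definition pnormal (k : fieldType) (v : k * k * k) : bool :=
  let: (x, y, z) := v in
  (x == 1) || ((x == 0) && (y == 1)) || [&& x == 0, y == 0 & z == 1].

Definition pvec (k : fieldType) := {v : k * k * k | pnormal v}.

Notation ppoint k := (pvec k).
Notation pline k := (pvec k).

Definition on_line (k : fieldType) (P : ppoint k) (L : pline k) : bool :=
  let: (x, y, z) := val P in
  let: (a, b, c) := val L in
  a * x + b * y + c * z == 0.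

(* Finite subsets of P^2 are represented by duplicate-free lists. *)

(* (Xs, Ls) define X as a k-configuration of type (d_1,...,d_s)
   (indices shifted to 0,...,s-1). *)
Definition defines_config (k : fieldType) (s : nat) (d : nat -> nat)
  (X : seq (ppoint k)) (Xs : 'I_s -> seq (ppoint k)) (Ls : 'I_s -> pline k) : Prop :=
  [/\ (forall P, P \in X <-> exists i, P \in Xs i),
      (forall i, uniq (Xs i) /\ size (Xs i) = d i),
      (forall i P, P \in Xs i -> on_line P (Ls i)),
      injective Ls &
      (forall i j : 'I_s, (j < i)%N -> forall P, P \in Xs j -> ~~ on_line P (Ls i))].

Definition config_type (s : nat) (d : nat -> nat) : Prop :=
  (forall i, (i < s)%N -> (1 <= d i)%N) /\
  (forall i, (i.+1 < s)%N -> (d i < d i.+1)%N).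

Definition is_kconfig (k : fieldType) (s : nat) (d : nat -> nat)
  (X : seq (ppoint k)) : Prop :=
  uniq X /\ config_type s d /\ exists Xs Ls, @defines_config k s d X Xs Ls.

Definition npts_on (k : fieldType) (X : seq (ppoint k)) (L : pline k) : nat :=
  count (fun P => on_line P L) X.

Definition lines_with (k : fieldType) (X : seq (ppoint k)) (n : nat)
  (ls : seq (pline k)) : Prop :=
  uniq ls /\ forall L, L \in ls <-> npts_on X L = n.

Definition exactly_one3 (A B C : Prop) : Prop :=
  [\/ A /\ ~ B /\ ~ C, ~ A /\ B /\ ~ C | ~ A /\ ~ B /\ C].

(* type (1,2,...,s) with 0-based indices *)
Definition type1s : nat -> nat := fun i => i.+1.

From HB Require Import structures.
From mathcomp Require Import all_boot all_order all_algebra.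
From mathcomp Require Import zify ring.
Set Implicit Arguments. Unset Strict Implicit. Unset Printing Implicit Defensive.
Import GRing.Theory.

(* Write X = X' ∪ X_s, where X_s consists of the s points of X on the last line L_s and X' is
   a configuration of type (1, ..., s - 1), and call a line full for X if it contains s points
   of X.  A line other than L_s meets X_s at most once, so a full line of X other than L_s is
   full for X'; by induction X has at most s + 1 full lines.
   Let ls be a family of s or s + 1 full lines and m(P) the number of lines of ls through P.
   Counting incidences gives sum m = |ls| s, counting pairs of lines through a point gives
   sum m^2 <= |ls| (s + |ls| - 1), and as |X| = s (s + 1) / 2 the pointwise inequality
   3 m <= m^2 + 2 becomes an equality after summation over X.  Hence every point lies on one
   or two lines of ls, and any two lines of ls meet in X.  With s + 1 full lines every point
   lies on exactly two of them, which is (i).  With s full lines each of them carries exactly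
   one point lying on no other full line, and any ordering of the lines yields the
   configuration of (ii).  With fewer than s full lines, induct on s: if X' has s - 1 or s full
   lines, the two constructions above, started with full lines of X' that are not full for X,
   give X' a first point lying on no full line of X, which is (iii). *)

Lemma count_sum (T : Type) (a : pred T) (r : seq T) :
  count a r = \sum_(x <- r) (a x : nat).
Proof. by rewrite -sumn_count sumnE big_map. Qed.

Lemma sum_nat_const_seq (I : eqType) (r : seq I) (F : I -> nat) c :
  {in r, forall i, F i = c} -> \sum_(i <- r) F i = size r * c.
Proof.
move=> Fc; rewrite big_seq_cond (eq_bigr (fun=> c)); last by move=> i /andP[/Fc].
by rewrite -big_seq_cond big_const_seq count_predT iter_addn_0 mulnC.
Qed.

Lemma eq_in_leq_sum (I : eqType) (r : seq I) (F G : I -> nat) :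
  {in r, forall i, F i <= G i} -> \sum_(i <- r) G i <= \sum_(i <- r) F i ->
  {in r, F =1 G}.
Proof.
elim: r => [|j r IH] leFG //; rewrite !big_cons => sumGF i.
have leFGr : {in r, forall i, F i <= G i} by move=> x xr; rewrite leFG // inE xr orbT.
have sumFG : \sum_(x <- r) F x <= \sum_(x <- r) G x.
  by rewrite big_seq_cond [leqRHS]big_seq_cond; apply: leq_sum => x /andP[/leFGr].
have leFGj := leFG j (mem_head j r).
rewrite inE => /predU1P[->|ir]; first by apply/eqP; rewrite eqn_leq leFGj; lia.
by apply: IH ir => //; lia.
Qed.

Lemma exactly_one3_intro (A B C : Prop) :
  (A -> ~ B /\ ~ C) -> (B -> ~ C) -> A \/ B \/ C -> exactly_one3 A B C.
Proof.
move=> nA nB [a|[b|c]].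
- by have [nb nc] := nA a; apply: Or31.
- apply: Or32; split; first by case/nA.
  by split=> //; exact: nB.
- apply: Or33; split; first by case/nA.
  by split=> // /nB.
Qed.

Lemma head_filter_mem (T : eqType) (x0 : T) (a : pred T) (r : seq T) :
  has a r -> head x0 (filter a r) \in filter a r.
Proof. by rewrite has_filter; case: filter => //= P r' _; exact: mem_head. Qed.

Lemma count_and_split (T : Type) (a b : pred T) (r : seq T) :
  count (fun x => a x && b x) r + count (fun x => a x && ~~ b x) r = count a r.
Proof. by elim: r => //= x r <-; case: (a x); case: (b x); rewrite /= ?addnS ?addSn. Qed.

Lemma count_le1 (T : eqType) (a : pred T) (X : seq T) : uniq X ->
  {in X &, forall P Q, a P -> a Q -> P = Q} -> count a X <= 1.
Proof.
move=> uX aX; rewrite -size_filter.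
case E: (filter a X) => [|P [|Q r]] //=.
have : P \in filter a X by rewrite E mem_head.
have : Q \in filter a X by rewrite E !inE eqxx orbT.
have PQ : P != Q by have := filter_uniq a uX; rewrite E /= inE => /andP[/norP[]].
rewrite !mem_filter => /andP[aQ QX] /andP[aP PX].
by rewrite (aX P Q) ?eqxx in PQ.
Qed.

Lemma count_gt1P (T : eqType) (a : pred T) (X : seq T) : uniq X -> 1 < count a X ->
  exists P Q, [/\ P \in X, Q \in X, a P, a Q & P != Q].
Proof.
move=> uX; rewrite -size_filter.
case E: (filter a X) => [|P [|Q r]] //= _.
have : P \in filter a X by rewrite E mem_head.
have : Q \in filter a X by rewrite E !inE eqxx orbT.
have PQ : P != Q by have := filter_uniq a uX; rewrite E /= inE => /andP[/norP[]].
by rewrite !mem_filter => /andP[aQ QX] /andP[aP PX]; exists P, Q.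
Qed.

Section Incidence.

Variables (T : eqType) (on : T -> T -> bool) (line_through : T -> T -> T).
Hypothesis on_uniq : forall P Q L M,
  P != Q -> on P L -> on Q L -> on P M -> on Q M -> L = M.
Hypothesis line_throughP : forall P Q,
  P != Q -> on P (line_through P Q) && on Q (line_through P Q).

Lemma meet_uniq L M P Q : L != M -> on P L -> on P M -> on Q L -> on Q M -> P = Q.
Proof.
move=> LM PL PM QL QM; apply/eqP; apply: contraNT LM => PQ; apply/eqP.
exact: on_uniq PQ PL QL PM QM.
Qed.

Definition npts (X : seq T) L := count (on^~ L) X.

Lemma perm_npts X Y L : perm_eq X Y -> npts X L = npts Y L.
Proof. by rewrite /npts => /permP ->. Qed.

(* [defines_config type1s] with 0-based [nat] indices, convenient for induction on [s]. *)
Definition config s (Xs : nat -> seq T) (Ls : nat -> T) :=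
 [/\ forall i, i < s -> uniq (Xs i) /\ size (Xs i) = i.+1,
     forall i P, i < s -> P \in Xs i -> on P (Ls i),
     forall i j, i < s -> j < s -> Ls i = Ls j -> i = j &
     forall i j, j < i -> i < s -> forall P, P \in Xs j -> ~~ on P (Ls i)].

Definition cpoints s (Xs : nat -> seq T) := flatten [seq Xs i | i <- iota 0 s].

Lemma cpointsS s Xs : cpoints s.+1 Xs = cpoints s Xs ++ Xs s.
Proof. by rewrite /cpoints -addn1 iotaD map_cat flatten_cat /= cats0. Qed.

Lemma eq_cpoints s Xs Xs' : (forall i, i < s -> Xs i = Xs' i) ->
  cpoints s Xs = cpoints s Xs'.
Proof.
move=> eXs; rewrite /cpoints; congr flatten; apply/eq_in_map => i.
by rewrite mem_iota add0n => /eXs.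
Qed.

Lemma mem_cpointsP s Xs P :
  reflect (exists2 i, i < s & P \in Xs i) (P \in cpoints s Xs).
Proof.
apply: (iffP idP).
  elim: s => [|s IH] //; rewrite cpointsS mem_cat => /orP[/IH[i lt_is Pi]|Ps].
    by exists i => //; apply: ltnW.
  by exists s.
case=> i; elim: s => [|s IH] //; rewrite cpointsS mem_cat ltnS leq_eqVlt.
by case/orP => [/eqP-> ->|/IH/[apply] ->]; rewrite ?orbT.
Qed.

Lemma config_prefix s Xs Ls : config s.+1 Xs Ls -> config s Xs Ls.
Proof.
case=> sizeX onX injL offX; split.
- by move=> i lt_is; apply: sizeX; apply: ltnW.
- by move=> i P lt_is; apply: onX; apply: ltnW.
- by move=> i j lt_is lt_js; apply: injL; apply: ltnW.
- by move=> i j lt_ji lt_is; apply: offX => //; apply: ltnW.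
Qed.

Section LastLine.
Variables (s : nat) (Xs : nat -> seq T) (Ls : nat -> T).
Hypothesis cfgX : config s.+1 Xs Ls.

Lemma cpoints_off_last P : P \in cpoints s Xs -> ~~ on P (Ls s).
Proof. by case: cfgX => _ _ _ offX /mem_cpointsP[i lt_is Pi]; apply: (offX s i). Qed.

Lemma npts_prefix_last : npts (cpoints s Xs) (Ls s) = 0.
Proof.
apply/eqP; rewrite -leqn0 leqNgt -has_count; apply/hasP => [[P /cpoints_off_last]].
by move/negbTE => ->.
Qed.

Lemma npts_last_line : npts (Xs s) (Ls s) = s.+1.
Proof.
case: cfgX => sizeX onX _ _; have [_ <-] := sizeX s (ltnSn s).
by apply/eqP; rewrite -all_count; apply/allP => P; apply: onX.
Qed.

Lemma npts_last_other L : L != Ls s -> npts (Xs s) L <= 1.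
Proof.
case: cfgX => sizeX onX _ _ LLs; apply: count_le1; first by case: (sizeX s (ltnSn s)).
by move=> P Q Ps Qs PL QL; apply: (meet_uniq LLs) => //; apply: onX.
Qed.

End LastLine.

Lemma npts_cpointsS s Xs L : npts (cpoints s.+1 Xs) L = npts (cpoints s Xs) L + npts (Xs s) L.
Proof. by rewrite /npts cpointsS count_cat. Qed.

Lemma uniq_cpoints s Xs Ls : config s Xs Ls -> uniq (cpoints s Xs).
Proof.
elim: s => [|s IH] cfgX //; rewrite cpointsS cat_uniq (IH (config_prefix cfgX)) /=.
have [sizeX onX _ _] := cfgX; have [-> _] := sizeX s (ltnSn s); rewrite andbT.
by apply/hasPn => P Ps; apply/negP => /(cpoints_off_last cfgX); rewrite onX.
Qed.

Lemma size_cpoints s Xs Ls : config s Xs Ls -> 2 * size (cpoints s Xs) = s * s.+1.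
Proof.
elim: s => [|s IH] cfgX //; rewrite cpointsS size_cat mulnDr (IH (config_prefix cfgX)).
by have [sizeX _ _ _] := cfgX; have [_ ->] := sizeX s (ltnSn s); lia.
Qed.

Lemma npts_cpoints_le s Xs Ls L : config s Xs Ls -> npts (cpoints s Xs) L <= s.
Proof.
elim: s => [|s IH] cfgX //; have [->|LLs] := eqVneq L (Ls s).
  by rewrite npts_cpointsS npts_prefix_last ?npts_last_line.
rewrite npts_cpointsS; have := IH (config_prefix cfgX).
by have := npts_last_other cfgX LLs; lia.
Qed.

Lemma npts_cpoints_last s Xs Ls : config s.+1 Xs Ls -> npts (cpoints s.+1 Xs) (Ls s) = s.+1.
Proof. by move=> cfgX; rewrite npts_cpointsS npts_prefix_last ?npts_last_line. Qed.

(* For [1 < s], a line with [s] points of [X] is the line through two of them. *)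
Definition full_lines s (X : seq T) :=
  undup [seq L <- [seq line_through P Q | P <- X, Q <- X] | npts X L == s].

Lemma uniq_full_lines s X : uniq (full_lines s X).
Proof. exact: undup_uniq. Qed.

Lemma mem_full_lines s X L : uniq X -> 1 < s ->
  (L \in full_lines s X) = (npts X L == s).
Proof.
move=> uX gt1s; rewrite mem_undup mem_filter andb_idr // => /eqP nL.
have [P [Q [PX QX PL QL PQ]]] : exists P Q, [/\ P \in X, Q \in X, on P L, on Q L & P != Q].
  by apply: count_gt1P; rewrite // -/(npts X L) nL.
have /andP[PPQ QPQ] := line_throughP PQ.
by rewrite (on_uniq PQ PL QL PPQ QPQ); apply/allpairsP; exists (P, Q).
Qed.

Lemma perm_full_lines s X Y : uniq X -> 1 < s -> perm_eq X Y ->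
  perm_eq (full_lines s X) (full_lines s Y).
Proof.
move=> uX gt1s XY; apply: uniq_perm; rewrite ?uniq_full_lines // => L.
by rewrite !mem_full_lines -?(perm_uniq XY) ?(perm_npts L XY).
Qed.

Lemma size_lines_with s X ls : uniq X -> 1 < s -> uniq ls ->
  (forall L, L \in ls <-> npts X L = s) -> size ls = size (full_lines s X).
Proof.
move=> uX gt1s uls lsP; apply/perm_size/uniq_perm => //; first exact: uniq_full_lines.
by move=> L; rewrite mem_full_lines //; apply/idP/eqP => /lsP.
Qed.

Lemma config2_points Xs Ls : config 2 Xs Ls -> exists A B C,
  [/\ cpoints 2 Xs = [:: A; B; C], B != C, ~~ on A (Ls 1), on B (Ls 1) & on C (Ls 1)].
Proof.
case=> sizeX onX _ offX.
have [_] := sizeX 0 isT; case E0: (Xs 0) => [|A []] // _.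
have [uX1] := sizeX 1 isT; case E1: (Xs 1) => [|B [|C []]] // _.
exists A, B, C; split; first by rewrite /cpoints /= E0 E1.
- by move: uX1; rewrite E1 /= inE andbT.
- by apply: (offX 1 0) => //; rewrite E0 mem_head.
- by apply: onX; rewrite ?E1 ?mem_head.
- by apply: onX; rewrite ?E1 ?inE ?eqxx ?orbT.
Qed.

Lemma size_full_lines2 Xs Ls : config 2 Xs Ls -> size (full_lines 2 (cpoints 2 Xs)) <= 3.
Proof.
move=> cfgX; have uX := uniq_cpoints cfgX.
have [A [B [C [EX BC AL BL CL]]]] := config2_points cfgX.
have AB : A != B by apply: contraNneq AL => ->.
have AC : A != C by apply: contraNneq AL => ->.
have /andP[AAB BAB] := line_throughP AB; have /andP[AAC CAC] := line_throughP AC.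
rewrite -[3]/(size [:: Ls 1; line_through A B; line_through A C]).
apply: uniq_leq_size; first exact: uniq_full_lines.
move=> L; rewrite mem_full_lines // EX /npts /= !inE.
case AL': (on A L); case BL': (on B L); case CL': (on C L) => //= _.
- by rewrite (on_uniq AB AL' BL' AAB BAB) eqxx orbT.
- by rewrite (on_uniq AC AL' CL' AAC CAC) eqxx !orbT.
- by rewrite (on_uniq BC BL' CL' BL CL) eqxx.
Qed.

Lemma full_lines_prefix s Xs Ls L : 1 < s -> config s.+1 Xs Ls ->
  L \in full_lines s.+1 (cpoints s.+1 Xs) -> L != Ls s ->
  L \in full_lines s (cpoints s Xs) /\ npts (Xs s) L = 1.
Proof.
move=> gt1s cfgX; have cfgX' := config_prefix cfgX.
rewrite !mem_full_lines ?(uniq_cpoints cfgX) ?(uniq_cpoints cfgX') //; last exact: ltnW.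
rewrite npts_cpointsS => /eqP nL LLs.
have := npts_cpoints_le L cfgX'; have := npts_last_other cfgX LLs; lia.
Qed.

Lemma size_full_lines_le s Xs Ls : 1 < s -> config s Xs Ls ->
  size (full_lines s (cpoints s Xs)) <= s.+1.
Proof.
elim: s Xs Ls => [|s IH] Xs Ls // gt1s cfgX.
have [s1|s_neq1] := eqVneq s 1; first by subst s; exact: size_full_lines2 cfgX.
have gt1s' : 1 < s by lia.
apply: (@leq_trans (size (Ls s :: full_lines s (cpoints s Xs)))); last first.
  by rewrite ltnS; apply: IH gt1s' (config_prefix cfgX).
apply: uniq_leq_size; first exact: uniq_full_lines.
move=> L LX; rewrite inE; have [//|LLs] := eqVneq L (Ls s).
by have [] := full_lines_prefix gt1s' cfgX LX LLs.
Qed.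

Section DoubleCounting.
Variables (s : nat) (Y ls : seq T).
Hypotheses (uY : uniq Y) (uls : uniq ls).
Hypothesis full : {in ls, forall L, npts Y L = s}.
Hypothesis sizeY : 2 * size Y = s * s.+1.
Hypothesis size_ls : size ls = s \/ size ls = s.+1.

Definition nlines P := count (on P) ls.

Lemma sum_nlines : \sum_(P <- Y) nlines P = size ls * s.
Proof.
rewrite /nlines; under eq_bigr do rewrite count_sum.
rewrite exchange_big; apply: sum_nat_const_seq => L /full <-.
by rewrite /npts count_sum.
Qed.

Lemma sum_nlines_sq : \sum_(P <- Y) nlines P ^ 2 =
  \sum_(L <- ls) \sum_(L' <- ls) count (fun P => on P L && on P L') Y.
Proof.
transitivity (\sum_(P <- Y) \sum_(L <- ls) \sum_(L' <- ls) (on P L && on P L' : nat)).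
  apply: eq_bigr => P _; rewrite -mulnn /nlines count_sum big_distrlr.
  by apply: eq_bigr => L _; apply: eq_bigr => L' _; rewrite /= mulnb.
rewrite exchange_big; apply: eq_bigr => L _.
by rewrite exchange_big; apply: eq_bigr => L' _; rewrite count_sum.
Qed.

Lemma count_meet_le L L' : L \in ls ->
  count (fun P => on P L && on P L') Y <= if L == L' then s else 1.
Proof.
move=> Lls; have [<-|LL'] := eqVneq L L'.
  by rewrite -(full Lls); under eq_count do rewrite andbb.
apply: count_le1 => // P Q _ _ /andP[PL PL'] /andP[QL QL'].
exact: meet_uniq LL' PL PL' QL QL'.
Qed.

Lemma sum_pair_bound :
  \sum_(L <- ls) \sum_(L' <- ls) (if L == L' then s else 1) = size ls * (s + (size ls).-1).
Proof.
apply: sum_nat_const_seq => L Lls; rewrite (bigD1_seq L) //= eqxx; congr (_ + _).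
rewrite (eq_bigr (fun=> 1)) => [|L' /negbTE]; last by rewrite eq_sym => ->.
by rewrite sum1_count -(count_predC (pred1 L) ls) count_uniq_mem // Lls add1n.
Qed.

Lemma sum_nlines_sq_le : \sum_(P <- Y) nlines P ^ 2 <= size ls * (s + (size ls).-1).
Proof.
rewrite sum_nlines_sq -sum_pair_bound big_seq_cond [leqRHS]big_seq_cond.
apply: leq_sum => L /andP[Lls _]; apply: leq_sum => L' _; exact: count_meet_le.
Qed.

(* (m - 1) (m - 2) >= 0; summing, the sizes of Y and ls force equality for every point *)
Lemma nlines_tight : {in Y, forall P, 3 * nlines P = nlines P ^ 2 + 2}.
Proof.
apply: eq_in_leq_sum => [P _|]; first by case: (nlines P) => [|[|m]] //; nia.
rewrite big_split /= -big_distrr /= sum_nlines (@sum_nat_const_seq _ Y (fun=> 2) 2) //.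
by have := sum_nlines_sq_le; case: size_ls => ->; case: s sizeY => [|n] /=; nia.
Qed.

Lemma nlines_1or2 P : P \in Y -> nlines P = 1 \/ nlines P = 2.
Proof. by move/nlines_tight; case: (nlines P) => [|[|[|m]]] //=; [left|right|nia]. Qed.

Lemma full_lines_meet L L' : L \in ls -> L' \in ls -> L != L' ->
  exists2 P, P \in Y & on P L && on P L'.
Proof.
move=> Lls L'ls LL'.
have sum_sq : \sum_(P <- Y) nlines P ^ 2 = size ls * (s + (size ls).-1).
  have : \sum_(P <- Y) (nlines P ^ 2 + 2) = \sum_(P <- Y) 3 * nlines P.
    by rewrite big_seq [RHS]big_seq; apply: eq_bigr => P /nlines_tight ->.
  rewrite big_split /= -big_distrr /= sum_nlines (@sum_nat_const_seq _ Y (fun=> 2) 2) //.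
  by case: size_ls => ->; case: s sizeY => [|n] /=; nia.
have meet_row : {in ls, forall L, \sum_(L' <- ls) count (fun P => on P L && on P L') Y =
                                  \sum_(L' <- ls) (if L == L' then s else 1)}.
  apply: eq_in_leq_sum => [L1 L1ls|]; first by apply: leq_sum => L2 _; exact: count_meet_le.
  by rewrite -sum_nlines_sq sum_pair_bound sum_sq.
have := eq_in_leq_sum (fun L2 _ => count_meet_le L2 Lls) (eq_leq (esym (meet_row L Lls))) L'ls.
rewrite (negbTE LL') => meet1.
have /hasP[P PY PLL'] : has (fun P => on P L && on P L') Y by rewrite has_count meet1.
by exists P.
Qed.

Lemma nlines_all2 : size ls = s.+1 -> {in Y, forall P, nlines P = 2}.
Proof.
move=> size_ls1; apply: eq_in_leq_sum => [P /nlines_1or2[]->//|].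
by rewrite sum_nlines size_ls1 (@sum_nat_const_seq _ Y (fun=> 2) 2) //; lia.
Qed.

End DoubleCounting.

Definition redefines n (X : seq T) Xs Ls := config n Xs Ls /\ cpoints n Xs =i X.

Section Redefinition.
(* [x0] is only a default value for [head] and [nth]. *)
Variables (x0 : T) (s : nat) (Y ls : seq T).
Hypotheses (uY : uniq Y) (uls : uniq ls).
Hypothesis full : {in ls, forall L, npts Y L = s}.
Hypothesis sizeY : 2 * size Y = s * s.+1.
Hypothesis size_ls : size ls = s \/ size ls = s.+1.

Let nlines12 := nlines_1or2 uY uls full sizeY size_ls.

Definition meet_pt L L' := head x0 [seq P <- Y | on P L && on P L'].

Lemma meet_ptP L L' : L \in ls -> L' \in ls -> L != L' ->
  [/\ meet_pt L L' \in Y, on (meet_pt L L') L & on (meet_pt L L') L'].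
Proof.
move=> Lls L'ls LL'; have [P PY PLL'] := full_lines_meet uY uls full sizeY size_ls Lls L'ls LL'.
have := @head_filter_mem _ x0 (fun P => on P L && on P L') Y.
by rewrite mem_filter => /(_ (introT hasP (ex_intro2 _ _ P PY PLL')))/andP[/andP[]].
Qed.

Lemma meet_pt_uniq L L' P : L \in ls -> L' \in ls -> L != L' ->
  on P L -> on P L' -> P = meet_pt L L'.
Proof.
move=> Lls L'ls LL' PL PL'; have [_ ML ML'] := meet_ptP Lls L'ls LL'.
exact: meet_uniq LL' PL PL' ML ML'.
Qed.

Lemma nlines_ge (r : seq T) P : uniq r -> {subset r <= ls} -> all (on P) r ->
  size r <= nlines ls P.
Proof.
move=> ur rls onr; rewrite /nlines -size_filter; apply: uniq_leq_size => // L Lr.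
by rewrite mem_filter (allP onr L Lr) rls.
Qed.

Lemma on_third_line P L1 L2 L3 : P \in Y -> L1 \in ls -> L2 \in ls -> L3 \in ls ->
  L1 != L2 -> on P L1 -> on P L2 -> on P L3 -> L3 = L1 \/ L3 = L2.
Proof.
move=> PY L1ls L2ls L3ls L12 PL1 PL2 PL3.
have [->|L31] := eqVneq L3 L1; first by left.
have [->|L32] := eqVneq L3 L2; first by right.
have := @nlines_ge [:: L1; L2; L3] P.
rewrite /= !inE negb_or L12 eq_sym L31 eq_sym L32 PL1 PL2 PL3.
have sub : {subset [:: L1; L2; L3] <= ls} by move=> L; rewrite !inE => /or3P[] /eqP->.
by move=> /(_ isT sub isT); case: (nlines12 PY) => ->.
Qed.

Lemma nlines_gt1 P L L' : L \in ls -> L' \in ls -> L != L' ->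
  on P L -> on P L' -> 1 < nlines ls P.
Proof.
move=> Lls L'ls LL' PL PL'; apply: (@nlines_ge [:: L; L']) => /=.
- by rewrite inE LL'.
- by move=> L''; rewrite !inE => /orP[] /eqP->.
- by rewrite PL PL'.
Qed.

Lemma nlines1_on_uniq P L L' : nlines ls P = 1 -> L \in ls -> L' \in ls ->
  on P L -> on P L' -> L = L'.
Proof.
move=> P1 Lls L'ls PL PL'; apply/eqP; apply: contraT => LL'.
by have := nlines_gt1 Lls L'ls LL' PL PL'; rewrite P1.
Qed.

Lemma exists_line P : P \in Y -> exists2 L, L \in ls & on P L.
Proof.
move=> PY; have : 0 < nlines ls P by case: (nlines12 PY) => ->.
by rewrite /nlines -has_count => /hasP.
Qed.

Lemma exists_two_lines P : nlines ls P = 2 ->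
  exists L L', [/\ L \in ls, L' \in ls, L != L', on P L & on P L'].
Proof.
move=> P2; have : 1 < count (on P) ls by rewrite -/(nlines ls P) P2.
by case/(count_gt1P uls) => L [L' [Lls L'ls PL PL' LL']]; exists L, L'.
Qed.

Lemma uniq_meet_pts L r : L \in ls -> uniq r -> {subset r <= ls} -> L \notin r ->
  uniq [seq meet_pt L L' | L' <- r].
Proof.
move=> Lls ur rls Lr; rewrite map_inj_in_uniq // => L1 L2 L1r L2r E.
have LL1 : L != L1 by apply: contraNneq Lr => ->.
have LL2 : L != L2 by apply: contraNneq Lr => ->.
have [MY ML ML1] := meet_ptP Lls (rls _ L1r) LL1.
have [_ _ ML2] := meet_ptP Lls (rls _ L2r) LL2; rewrite -E in ML2.
have [L2L|->//] := on_third_line MY Lls (rls _ L1r) (rls _ L2r) LL1 ML ML1 ML2.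
by rewrite L2L eqxx in LL2.
Qed.

Definition line_at i := nth x0 ls i.

Lemma line_at_mem i : i < size ls -> line_at i \in ls.
Proof. exact: mem_nth. Qed.

Lemma line_at_in_take i j : i < size ls -> (line_at i \in take j ls) = (i < j).
Proof. by move=> lt_i; rewrite in_take ?line_at_mem // index_uniq. Qed.

Lemma line_at_inj i j : i < size ls -> j < size ls -> (line_at i == line_at j) = (i == j).
Proof. by move=> lt_i lt_j; rewrite /line_at nth_uniq. Qed.

Lemma meet_pt_off j i L : j < i -> i < size ls -> L \in take j ls ->
  ~~ on (meet_pt (line_at j) L) (line_at i).
Proof.
move=> lt_ji lt_i Lj; have lt_j := ltn_trans lt_ji lt_i.
have Lls := mem_take Lj.
have jL : line_at j != L by apply: contraTneq Lj => <-; rewrite line_at_in_take ?ltnn.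
have [MY Mj ML] := meet_ptP (line_at_mem lt_j) Lls jL.
apply/negP => Mi.
case: (on_third_line MY (line_at_mem lt_j) Lls (line_at_mem lt_i) jL Mj ML Mi) => [/eqP|iL].
  by rewrite line_at_inj // => /eqP ij; rewrite ij ltnn in lt_ji.
by move: Lj; rewrite -iL line_at_in_take // ltnNge ltnW.
Qed.

Lemma meet_pt_index P : nlines ls P = 2 ->
  exists i j, [/\ j < i < size ls & P = meet_pt (line_at i) (line_at j)].
Proof.
move=> P2; have [L [L' [Lls L'ls LL' PL PL']]] := exists_two_lines P2.
wlog lt_LL' : L L' Lls L'ls LL' PL PL' / index L ls < index L' ls.
  move=> gen; case: (ltngtP (index L ls) (index L' ls)) => [|lt|/(congr1 (nth x0 ls))].
  - exact: gen.
  - by apply: (gen L' L) => //; rewrite eq_sym.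
  - by rewrite !nth_index // => LL; rewrite LL eqxx in LL'.
exists (index L' ls), (index L ls); rewrite lt_LL' index_mem L'ls /line_at !nth_index //.
by split=> //; apply: meet_pt_uniq => //; rewrite eq_sym.
Qed.

Lemma meet_pt_takeP i L : i < size ls -> L \in take i ls ->
  [/\ meet_pt (line_at i) L \in Y, on (meet_pt (line_at i) L) (line_at i),
      on (meet_pt (line_at i) L) L & nlines ls (meet_pt (line_at i) L) = 2].
Proof.
move=> lt_i Li; have iL : line_at i != L.
  by apply: contraTneq Li => <-; rewrite line_at_in_take ?ltnn.
have [MY Mi ML] := meet_ptP (line_at_mem lt_i) (mem_take Li) iL.
split=> //; have := nlines_gt1 (line_at_mem lt_i) (mem_take Li) iL Mi ML.
by case: (nlines12 MY) => ->.
Qed.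

Section LonePoints.
Hypothesis size_s : size ls = s.

Definition lone_pt L := head x0 [seq P <- Y | on P L && (nlines ls P == 1)].

(* The other [s - 1] points of [Y] on [L] are its meets with the other lines of [ls]. *)
Lemma count_lone L : L \in ls -> count (fun P => on P L && (nlines ls P == 1)) Y = 1.
Proof.
move=> Lls; set meets := [seq meet_pt L L' | L' <- rem L ls].
have u_meets : uniq meets.
  by apply: uniq_meet_pts; rewrite ?rem_uniq ?mem_rem_uniqF //; apply: mem_rem.
have meetsE : perm_eq [seq P <- Y | on P L && (nlines ls P != 1)] meets.
  apply: uniq_perm; rewrite ?filter_uniq // => P; rewrite mem_filter.
  apply/idP/mapP => [/andP[/andP[PL P1] PY]|[L' L'L ->]].
    have P2 : nlines ls P = 2 by case: (nlines12 PY) P1 => ->.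
    have [L1 [L2 [L1ls L2ls L12 PL1 PL2]]] := exists_two_lines P2.
    have [E|E] := on_third_line PY L1ls L2ls Lls L12 PL1 PL2 PL; [subst L1|subst L2].
      exists L2; first by rewrite mem_rem_uniq // inE eq_sym L12.
      exact: meet_pt_uniq.
    exists L1; first by rewrite mem_rem_uniq // inE L12.
    by apply: meet_pt_uniq; rewrite // eq_sym.
  move: L'L; rewrite mem_rem_uniq // inE => /andP[L'L L'ls].
  have LL' : L != L' by rewrite eq_sym.
  have [MY ML ML'] := meet_ptP Lls L'ls LL'.
  by rewrite ML MY neq_ltn (nlines_gt1 Lls L'ls LL' ML ML') orbT.
have nonlone : count (fun P => on P L && (nlines ls P != 1)) Y = s.-1.
  by rewrite -size_filter (perm_size meetsE) size_map size_rem // size_s.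
have := count_and_split (on^~ L) (fun P => nlines ls P == 1) Y.
rewrite nonlone -/(npts Y L) full //.
have s_pos : 0 < s by rewrite -size_s; case: (ls) Lls.
lia.
Qed.

Lemma lone_ptP L : L \in ls ->
  [/\ lone_pt L \in Y, on (lone_pt L) L & nlines ls (lone_pt L) = 1].
Proof.
move=> Lls; have := @head_filter_mem _ x0 (fun P => on P L && (nlines ls P == 1)) Y.
by rewrite has_count count_lone // mem_filter => /(_ isT) /andP[/andP[-> /eqP->] ->].
Qed.

Lemma lone_pt_uniq L P : L \in ls -> P \in Y -> on P L -> nlines ls P = 1 -> P = lone_pt L.
Proof.
move=> Lls PY PL P1; have := count_lone Lls; rewrite -size_filter /lone_pt.
case E: (filter _ Y) => [|Q []] // _.
have : P \in filter (fun P => on P L && (nlines ls P == 1)) Y by rewrite mem_filter PL P1 eqxx.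
by rewrite E inE => /eqP.
Qed.

Definition lone_pts i := lone_pt (line_at i) :: [seq meet_pt (line_at i) L | L <- take i ls].

Lemma mem_lone_pts i P : P \in lone_pts i ->
  P = lone_pt (line_at i) \/ exists2 L, L \in take i ls & P = meet_pt (line_at i) L.
Proof. by rewrite inE => /predU1P[->|/mapP]; [left|right]. Qed.

Lemma lone_config : redefines s Y lone_pts line_at.
Proof.
have lt_s i : i < s -> i < size ls by rewrite size_s.
split; first split.
- move=> i lt_is; rewrite /= size_map size_take (lt_s _ lt_is); split=> //.
  rewrite /= uniq_meet_pts ?take_uniq ?line_at_mem ?line_at_in_take ?ltnn ?lt_s //;
    last exact: mem_take.
  have [_ _ l1] := lone_ptP (line_at_mem (lt_s _ lt_is)).
  by rewrite andbT; apply/mapP => -[L /(meet_pt_takeP (lt_s _ lt_is)) [_ _ _ +] E]; rewrite -E l1.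
- move=> i P lt_is /mem_lone_pts [->|[L /(meet_pt_takeP (lt_s _ lt_is))[_ + _ _] ->]] //.
  by case: (lone_ptP (line_at_mem (lt_s _ lt_is))).
- by move=> i j lt_is lt_js /eqP; rewrite line_at_inj ?lt_s // => /eqP.
- move=> i j lt_ji lt_is P /mem_lone_pts [->|[L Lj ->]].
    have lt_j := lt_s _ (ltn_trans lt_ji lt_is).
    have [_ lj l1] := lone_ptP (line_at_mem lt_j); apply/negP => li.
    have /eqP := nlines1_on_uniq l1 (line_at_mem lt_j) (line_at_mem (lt_s _ lt_is)) lj li.
    by rewrite (line_at_inj lt_j (lt_s _ lt_is)) => /eqP ji; rewrite ji ltnn in lt_ji.
  exact: meet_pt_off lt_ji (lt_s _ lt_is) Lj.
move=> P; apply/mem_cpointsP/idP => [[i lt_is]|PY].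
  case/mem_lone_pts => [->|[L /(meet_pt_takeP (lt_s _ lt_is))[MY _ _ _] ->]] //.
  by case: (lone_ptP (line_at_mem (lt_s _ lt_is))).
case: (nlines12 PY) => [P1|P2].
  have [L Lls PL] := exists_line PY.
  have lt_L : index L ls < s by rewrite -size_s index_mem.
  exists (index L ls) => //.
  by rewrite /lone_pts /line_at nth_index // -(lone_pt_uniq Lls PY PL P1) mem_head.
have [i [j [/andP[lt_ji lt_i] ->]]] := meet_pt_index P2.
exists i; first by rewrite -size_s.
rewrite inE; apply/orP; right; apply/mapP; exists (line_at j) => //.
by rewrite line_at_in_take // (ltn_trans lt_ji).
Qed.
End LonePoints.

Section PairPoints.
Hypothesis size_s1 : size ls = s.+1.

Definition pair_pts i := [seq meet_pt (line_at i.+1) L | L <- take i.+1 ls].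

Lemma pair_config : redefines s Y pair_pts (fun i => line_at i.+1).
Proof.
have lt_s i : i < s -> i.+1 < size ls by rewrite size_s1.
split; first split.
- move=> i lt_is; rewrite size_map size_take (lt_s _ lt_is); split=> //.
  rewrite uniq_meet_pts ?take_uniq ?line_at_mem ?line_at_in_take ?ltnn ?lt_s //.
  exact: mem_take.
- by move=> i P lt_is /mapP[L /(meet_pt_takeP (lt_s _ lt_is))[_ + _ _] ->].
- by move=> i j lt_is lt_js /eqP; rewrite line_at_inj ?lt_s // => /eqP [].
- by move=> i j lt_ji lt_is P /mapP[L Lj ->]; apply: meet_pt_off Lj; rewrite ?lt_s.
move=> P; apply/mem_cpointsP/idP => [[i lt_is /mapP[L]]|PY].
  by move=> /(meet_pt_takeP (lt_s _ lt_is))[MY _ _ _] ->.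
have P2 := nlines_all2 uY uls full sizeY size_ls size_s1 PY.
have [[|i] [j [/andP[lt_ji lt_i] ->]]] := meet_pt_index P2 => //.
exists i; first by rewrite -ltnS -size_s1.
by apply/mapP; exists (line_at j); rewrite // line_at_in_take // (ltn_trans lt_ji).
Qed.

Lemma pair_pts0 : pair_pts 0 = [:: meet_pt (line_at 1) (line_at 0)].
Proof. by rewrite /pair_pts /line_at; case: (ls) size_s1 => [|L []]. Qed.

End PairPoints.

End Redefinition.

Definition splice (A : Type) n (f g : nat -> A) i := if i < n then f i else g i.

Lemma redefines_splice s Xs Ls Xs' Ls' : config s.+1 Xs Ls ->
  redefines s (cpoints s Xs) Xs' Ls' ->
  redefines s.+1 (cpoints s.+1 Xs) (splice s Xs' Xs) (splice s Ls' Ls).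
Proof.
move=> cfgX [cfgX' sameX].
have off_s i P : i < s -> P \in Xs' i -> ~~ on P (Ls s).
  by move=> lt_is Pi; apply: (cpoints_off_last cfgX); rewrite -sameX; apply/mem_cpointsP; exists i.
have neq_s i : i < s -> Ls' i != Ls s.
  move=> lt_is; case: cfgX' => sizeX' onX' _ _.
  have [_] := sizeX' i lt_is; case E: (Xs' i) => [|P r] // _.
  have Pi : P \in Xs' i by rewrite E mem_head.
  by apply: contraTneq (onX' i P lt_is Pi) => ->; exact: off_s Pi.
have last_s i : i < s.+1 -> ~~ (i < s) -> i = s by rewrite ltnS leqNgt => /negbTE; lia.
case: cfgX cfgX' => [sizeX onX injL offX] [sizeX' onX' injL' offX'].
split; first split; rewrite /splice.
- by move=> i lt_is1; case: ifP => [|/negbT/(last_s i lt_is1)->]; [exact: sizeX'|exact: sizeX].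
- by move=> i P lt_is1; case: ifP => [|/negbT/(last_s i lt_is1)->]; [exact: onX'|exact: onX].
- move=> i j lt_is1 lt_js1; case: ifP => [lt_is|/negbT/(last_s i lt_is1)->];
    case: ifP => [lt_js|/negbT/(last_s j lt_js1)->] //.
  + exact: injL'.
  + by move/eqP; rewrite (negbTE (neq_s i lt_is)).
  + by move/esym/eqP; rewrite (negbTE (neq_s j lt_js)).
- move=> i j lt_ji lt_is1; have lt_js : j < s by lia.
  rewrite lt_js; case: ifP => [lt_is|/negbT/(last_s i lt_is1)->]; first exact: offX'.
  by move=> P; apply: off_s.
move=> P; rewrite !cpointsS !mem_cat ltnn (@eq_cpoints s _ Xs') ?sameX //.
by move=> i ->.
Qed.

Definition off_lines (A ls : seq T) := forall P L, P \in A -> L \in ls -> ~~ on P L.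

Section RedefineFullLines.
Variables (s : nat) (Xs : nat -> seq T) (Ls : nat -> T).
Hypotheses (gt1s : 1 < s) (cfgX : config s Xs Ls).

Let X := cpoints s Xs.
Let ls := full_lines s X.
Let uX : uniq X := uniq_cpoints cfgX.
Let sizeX : 2 * size X = s * s.+1 := size_cpoints cfgX.

Lemma reordered_full_lines ms : perm_eq ls ms ->
  [/\ uniq ms, {in ms, forall L, npts X L = s} & size ms = size ls].
Proof.
move=> ls_ms; rewrite -(perm_uniq ls_ms) uniq_full_lines (perm_size ls_ms); split=> // L.
by rewrite -(perm_mem ls_ms) mem_full_lines // => /eqP.
Qed.

Lemma redefine_lone a : size ls = s -> a \in ls ->
  exists Xs' Ls', redefines s X Xs' Ls' /\ off_lines (Xs' 0) [seq L <- ls | L != a].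
Proof.
move=> size_ls a_ls; have ls_ms := perm_to_rem a_ls; set ms := a :: rem a ls in ls_ms.
have [ums full_ms size_ms] := reordered_full_lines ls_ms.
have size_ms' : size ms = s \/ size ms = s.+1 by left; rewrite size_ms.
have size_ms_s : size ms = s by rewrite size_ms.
exists (lone_pts a X ms), (line_at a ms); split; first exact: lone_config.
move=> P L; rewrite inE mem_filter => /eqP-> /andP[La Lls].
have a_ms : a \in ms := mem_head a _.
have [_ Pa P1] := lone_ptP a uX ums full_ms sizeX size_ms' size_ms_s a_ms.
apply: contra La => PL; apply/eqP.
by apply: (nlines1_on_uniq P1); rewrite -?(perm_mem ls_ms).
Qed.

Lemma redefine_pair a b : size ls = s.+1 -> a \in ls -> b \in ls -> a != b ->
  exists Xs' Ls', redefines s X Xs' Ls' /\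
    off_lines (Xs' 0) [seq L <- ls | L \notin [:: a; b]].
Proof.
move=> size_ls a_ls b_ls ab.
have b_rem : b \in rem a ls by rewrite mem_rem_uniq ?uniq_full_lines // inE eq_sym ab.
have ls_ms : perm_eq ls [:: a, b & rem b (rem a ls)].
  by apply: (perm_trans (perm_to_rem a_ls)); rewrite perm_cons perm_to_rem.
set ms := [:: a, b & _] in ls_ms.
have [ums full_ms size_ms] := reordered_full_lines ls_ms.
have size_ms1 : size ms = s.+1 by rewrite size_ms.
have size_ms' : size ms = s \/ size ms = s.+1 by right.
exists (pair_pts a X ms), (fun i => line_at a ms i.+1); split; first exact: pair_config.
move=> P L; rewrite (pair_pts0 a X size_ms1) inE mem_filter !inE => /eqP-> /andP[/norP[La Lb] Lls].
have ba : b != a by rewrite eq_sym.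
have a_ms : a \in ms := mem_head _ _.
have b_ms : b \in ms by rewrite !inE eqxx orbT.
have [MY Mb Ma] := meet_ptP a uX ums full_ms sizeX size_ms' b_ms a_ms ba.
have L_ms : L \in ms by rewrite -(perm_mem ls_ms).
apply/negP => ML.
have [/eqP|/eqP] := on_third_line uX ums full_ms sizeX size_ms' MY b_ms a_ms L_ms ba Mb Ma ML.
  by rewrite (negbTE Lb).
by rewrite (negbTE La).
Qed.

End RedefineFullLines.

Lemma full_lines2_ge Xs Ls : config 2 Xs Ls -> 2 <= size (full_lines 2 (cpoints 2 Xs)).
Proof.
move=> cfgX; have uX := uniq_cpoints cfgX.
have [A [B [C [EX BC AL BL CL]]]] := config2_points cfgX.
have AB : A != B by apply: contraNneq AL => ->.
have /andP[AAB BAB] := line_throughP AB.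
have CAB : ~~ on C (line_through A B).
  by apply: contraNN AL => CAB; rewrite -(on_uniq BC BAB CAB BL CL).
rewrite -[2]/(size [:: Ls 1; line_through A B]); apply: uniq_leq_size.
  by rewrite /= inE andbT; apply: contraNneq AL => ->.
move=> L; rewrite !inE mem_full_lines // => /orP[]/eqP->.
  by rewrite (npts_cpoints_last cfgX).
by rewrite EX /npts /= AAB BAB (negbTE CAB).
Qed.

Lemma count_full_lines_prefix s Xs Ls : 1 < s -> config s.+1 Xs Ls ->
  count (mem (full_lines s.+1 (cpoints s.+1 Xs))) (full_lines s (cpoints s Xs)) <
  size (full_lines s.+1 (cpoints s.+1 Xs)).
Proof.
move=> gt1s cfgX; set ls := full_lines s.+1 _; set ls' := full_lines s _.
have Ls_ls : Ls s \in ls.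
  by rewrite mem_full_lines ?(uniq_cpoints cfgX) ?npts_cpoints_last //; exact: ltnW.
apply: (@leq_ltn_trans (size (rem (Ls s) ls))).
  2: by rewrite size_rem // ltn_predL; case: (ls) Ls_ls.
rewrite -size_filter.
apply: uniq_leq_size; first exact/filter_uniq/uniq_full_lines.
move=> L; rewrite mem_filter mem_rem_uniq ?uniq_full_lines // => /andP[L_ls L_ls'].
rewrite inE; apply/andP; split=> //; apply: contraTneq L_ls' => ->.
by rewrite mem_full_lines ?(uniq_cpoints (config_prefix cfgX)) ?(npts_prefix_last cfgX) //; lia.
Qed.

Lemma redefine_few_full_lines s Xs Ls : 1 < s -> config s Xs Ls ->
  size (full_lines s (cpoints s Xs)) < s ->
  exists Xs' Ls', redefines s (cpoints s Xs) Xs' Ls' /\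
    off_lines (Xs' 0) (full_lines s (cpoints s Xs)).
Proof.
elim: s Xs Ls => [|s IH] Xs Ls // gt1s cfgX few.
have [s1|s_neq1] := eqVneq s 1.
  by subst s; have := full_lines2_ge cfgX; rewrite leqNgt few.
have gt1s' : 1 < s by lia.
have cfgX' := config_prefix cfgX.
have count_ls := count_full_lines_prefix gt1s' cfgX.
have size_ls' := size_full_lines_le gt1s' cfgX'.
set ls := full_lines s.+1 _ in few count_ls *.
set ls' := full_lines s (cpoints s Xs) in count_ls size_ls' *.
suff [Xs' [Ls' [redefX' off']]] : exists Xs' Ls', redefines s (cpoints s Xs) Xs' Ls' /\
    off_lines (Xs' 0) [seq L <- ls' | L \in ls].
  exists (splice s Xs' Xs), (splice s Ls' Ls); split; first exact: redefines_splice.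
  move=> P L; rewrite /splice (ltnW gt1s') => P0 Lls.
  have [->|LLs] := eqVneq L (Ls s).
    by apply: (cpoints_off_last cfgX); rewrite -redefX'.2; apply/mem_cpointsP; exists 0; lia.
  by apply: off' P0 _; rewrite mem_filter Lls (full_lines_prefix gt1s' cfgX Lls LLs).1.
case: (ltngtP (size ls') s) => [lt_s|gt_s|eq_s].
- have [Xs' [Ls' [redefX' off']]] := IH Xs Ls gt1s' cfgX' lt_s.
  by exists Xs', Ls'; split=> // P L P0; rewrite mem_filter => /andP[_]; exact: off' P0.
- have eq_s1 : size ls' = s.+1 by lia.
  have : 1 < count (predC (mem ls)) ls' by have := count_predC (mem ls) ls'; lia.
  case/(count_gt1P (uniq_full_lines _ _)) => a [b [a_ls' b_ls' a_ls b_ls ab]].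
  have [Xs' [Ls' [redefX' off']]] := redefine_pair gt1s' cfgX' eq_s1 a_ls' b_ls' ab.
  exists Xs', Ls'; split=> // P L P0; rewrite mem_filter => /andP[Lls L_ls'].
  apply: off' P0 _; rewrite mem_filter L_ls' !inE andbT.
  by apply/norP; split; [apply: contraNneq a_ls => <- | apply: contraNneq b_ls => <-].
- have : 0 < count (predC (mem ls)) ls' by have := count_predC (mem ls) ls'; lia.
  rewrite -has_count => /hasP[a a_ls' a_ls].
  have [Xs' [Ls' [redefX' off']]] := redefine_lone gt1s' cfgX' eq_s a_ls'.
  exists Xs', Ls'; split=> // P L P0; rewrite mem_filter => /andP[Lls L_ls'].
  by apply: off' P0 _; rewrite mem_filter L_ls' andbT; apply: contraNneq a_ls => <-.
Qed.

End Incidence.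

Section PlaneGeometry.
Variable k : fieldType.
Local Open Scope ring_scope.

Definition cross (u v : k * k * k) : k * k * k :=
  let: (u1, u2, u3) := u in let: (v1, v2, v3) := v in
  (u2 * v3 - u3 * v2, u3 * v1 - u1 * v3, u1 * v2 - u2 * v1).

Definition dot (u v : k * k * k) : k :=
  let: (u1, u2, u3) := u in let: (v1, v2, v3) := v in
  u1 * v1 + u2 * v2 + u3 * v3.

Definition zero3 : k * k * k := (0, 0, 0).

Lemma minors0_trans (a1 a2 a3 b1 b2 b3 c1 c2 c3 : k) : c1 != 0 ->
  a3 * c1 = a1 * c3 -> a1 * c2 = a2 * c1 -> b3 * c1 = b1 * c3 -> b1 * c2 = b2 * c1 ->
  [/\ a2 * b3 = a3 * b2, a3 * b1 = a1 * b3 & a1 * b2 = a2 * b1].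
Proof.
move=> c1_neq0 ea3 ea2 eb3 eb2; split.
- apply: (mulfI (mulf_neq0 c1_neq0 c1_neq0)).
  have -> : c1 * c1 * (a2 * b3) = (a1 * c2) * (b3 * c1) by rewrite ea2; ring.
  have -> : c1 * c1 * (a3 * b2) = (a3 * c1) * (b1 * c2) by rewrite eb2; ring.
  by rewrite eb3 ea3; ring.
- apply: (mulfI c1_neq0).
  have -> : c1 * (a3 * b1) = (a3 * c1) * b1 by ring.
  have -> : c1 * (a1 * b3) = a1 * (b3 * c1) by ring.
  by rewrite ea3 eb3; ring.
- apply: (mulfI c1_neq0).
  have -> : c1 * (a1 * b2) = a1 * (b1 * c2) by rewrite eb2; ring.
  have -> : c1 * (a2 * b1) = (a1 * c2) * b1 by rewrite ea2; ring.
  ring.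
Qed.

Lemma cross0_minors (a c : k * k * k) : cross a c = zero3 ->
  let: (a1, a2, a3) := a in let: (c1, c2, c3) := c in
  [/\ a2 * c3 = a3 * c2, a3 * c1 = a1 * c3 & a1 * c2 = a2 * c1].
Proof.
case: a => [[a1 a2] a3]; case: c => [[c1 c2] c3] /= [e1 e2 e3].
by split; apply/eqP; rewrite -subr_eq0; apply/eqP.
Qed.

Lemma cross0_trans (a b c : k * k * k) : c != zero3 ->
  cross a c = zero3 -> cross b c = zero3 -> cross a b = zero3.
Proof.
case: a => [[a1 a2] a3]; case: b => [[b1 b2] b3]; case: c => [[c1 c2] c3] c_neq0.
move=> /cross0_minors [ea1 ea2 ea3] /cross0_minors [eb1 eb2 eb3].
suff [e1 e2 e3] : [/\ a2 * b3 = a3 * b2, a3 * b1 = a1 * b3 & a1 * b2 = a2 * b1].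
  by rewrite /cross e1 e2 e3 !subrr.
have [c1_0|c1_neq0] := eqVneq c1 0; last exact: minors0_trans c1_neq0 ea2 ea3 eb2 eb3.
have [c2_0|c2_neq0] := eqVneq c2 0.
  have [c3_0|c3_neq0] := eqVneq c3 0; first by move: c_neq0; rewrite c1_0 c2_0 c3_0 eqxx.
  by have [? ? ?] := minors0_trans c3_neq0 ea1 ea2 eb1 eb2; split.
by have [? ? ?] := minors0_trans c2_neq0 ea3 ea1 eb3 eb1; split.
Qed.

Lemma cross_cross_orth (a p q : k * k * k) : dot a p = 0 -> dot a q = 0 ->
  cross a (cross p q) = zero3.
Proof.
case: a => [[a1 a2] a3]; case: p => [[p1 p2] p3]; case: q => [[q1 q2] q3] /= ap aq.
rewrite /zero3; congr (_, _, _); [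
  transitivity (p1 * (a1 * q1 + a2 * q2 + a3 * q3) - q1 * (a1 * p1 + a2 * p2 + a3 * p3)) |
  transitivity (p2 * (a1 * q1 + a2 * q2 + a3 * q3) - q2 * (a1 * p1 + a2 * p2 + a3 * p3)) |
  transitivity (p3 * (a1 * q1 + a2 * q2 + a3 * q3) - q3 * (a1 * p1 + a2 * p2 + a3 * p3))];
  by [ring | rewrite ap aq !mulr0 subrr].
Qed.

Lemma pnormal_cross0_eq (u v : k * k * k) : pnormal u -> pnormal v -> cross u v = zero3 -> u = v.
Proof.
case: u => [[u1 u2] u3]; case: v => [[v1 v2] v3] /= nu nv [e1 e2 e3].
case/orP: nu => [/orP[/eqP h1|/andP[/eqP h1 /eqP h2]]|/and3P[/eqP h1 /eqP h2 /eqP h3]];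
case/orP: nv => [/orP[/eqP g1|/andP[/eqP g1 /eqP g2]]|/and3P[/eqP g1 /eqP g2 /eqP g3]];
subst; rewrite ?mul0r ?mul1r ?mulr0 ?mulr1 ?subr0 ?sub0r in e1 e2 e3.
all: try (by move/eqP: e1; rewrite ?oppr_eq0 oner_eq0).
all: try (by move/eqP: e2; rewrite ?oppr_eq0 oner_eq0).
all: try (by move/eqP: e3; rewrite ?oppr_eq0 oner_eq0).
all: try (move/eqP: e1; rewrite subr_eq0 => /eqP e1).
all: try (move/eqP: e2; rewrite subr_eq0 => /eqP e2).
all: try (move/eqP: e3; rewrite subr_eq0 => /eqP e3).
all: by subst.
Qed.

Lemma on_lineE (P L : pvec k) : on_line P L = (dot (val L) (val P) == 0).
Proof. by case: P => [[[x y] z] nP]; case: L => [[[a b] c] nL]. Qed.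

Lemma cross_pvec_neq0 (P Q : pvec k) : P != Q -> cross (val P) (val Q) != zero3.
Proof.
by apply: contra => /eqP /(pnormal_cross0_eq (valP P) (valP Q)) PQ; apply/eqP/val_inj.
Qed.

Lemma on_line_uniq (P Q L M : pvec k) : P != Q -> on_line P L -> on_line Q L ->
  on_line P M -> on_line Q M -> L = M.
Proof.
move=> PQ; rewrite !on_lineE => /eqP PL /eqP QL /eqP PM /eqP QM.
apply/val_inj/(pnormal_cross0_eq (valP L) (valP M)).
exact: cross0_trans (cross_pvec_neq0 PQ) (cross_cross_orth PL QL) (cross_cross_orth PM QM).
Qed.

Definition normalize (v : k * k * k) : k * k * k :=
  let: (x, y, z) := v in
  if x != 0 then (1, y / x, z / x) else if y != 0 then (0, 1, z / y) else (0, 0, 1).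

Lemma pnormal_normalize v : pnormal (normalize v).
Proof.
case: v => [[x y] z] /=; case: ifP => _; [|case: ifP => _];
  by rewrite /pnormal !eqxx /= ?orbT ?andbT.
Qed.

Lemma dot_normalize v p : v != zero3 -> dot v p = 0 -> dot (normalize v) p = 0.
Proof.
case: v => [[x y] z]; case: p => [[p1 p2] p3] /= v_neq0 vp.
have [x0|x_neq0] /= := eqVneq x 0.
  have [y0|y_neq0] /= := eqVneq y 0.
    subst x y; have z_neq0 : z != 0 by apply: contra v_neq0 => /eqP->.
    move: vp; rewrite !mul0r !add0r => /eqP; rewrite mulf_eq0 (negbTE z_neq0) => /eqP->.
    by rewrite mulr0.
  have -> : 0 * p1 + 1 * p2 + z / y * p3 = (x * p1 + y * p2 + z * p3) / y by rewrite x0; field.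
  by rewrite vp mul0r.
have -> : 1 * p1 + y / x * p2 + z / x * p3 = (x * p1 + y * p2 + z * p3) / x by field.
by rewrite vp mul0r.
Qed.

Definition pvec_of (v : k * k * k) : pvec k := exist _ (normalize v) (pnormal_normalize v).

Definition line_through (P Q : pvec k) : pline k := pvec_of (cross (val P) (val Q)).

Lemma line_throughP (P Q : pvec k) : P != Q ->
  on_line P (line_through P Q) && on_line Q (line_through P Q).
Proof.
move=> PQ; rewrite !on_lineE /=; apply/andP.
by split; apply/eqP/dot_normalize; rewrite ?cross_pvec_neq0 //;
  case: (val P) => [[p1 p2] p3]; case: (val Q) => [[q1 q2] q3] /=; ring.
Qed.

End PlaneGeometry.

Definition natfun (A : Type) s (d : A) (f : 'I_s -> A) (i : nat) : A := oapp f d (insub i).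

Lemma natfunE (A : Type) s (d : A) (f : 'I_s -> A) (i : 'I_s) : natfun d f i = f i.
Proof. by rewrite /natfun valK. Qed.

Lemma natfun_lt (A : Type) s (d : A) (f : 'I_s -> A) i (lt_is : i < s) :
  natfun d f i = f (Ordinal lt_is).
Proof. exact: (natfunE d f (Ordinal lt_is)). Qed.

Section OrdinalIndexing.
Variables (k : fieldType) (s : nat) (X : seq (ppoint k)).

Lemma redefines_of_defines (Xs : 'I_s -> seq (ppoint k)) (Ls : 'I_s -> pline k) (d : pline k) :
  defines_config type1s X Xs Ls -> redefines (@on_line k) s X (natfun [::] Xs) (natfun d Ls).
Proof.
case=> XP sizeX onX injL offX; split; first split.
- by move=> i lt_is; rewrite natfun_lt; apply: sizeX.
- by move=> i P lt_is; rewrite !natfun_lt; apply: onX.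
- by move=> i j lt_is lt_js; rewrite !natfun_lt => /injL [].
- move=> i j lt_ji lt_is P; have lt_js := ltn_trans lt_ji lt_is.
  by rewrite (natfun_lt _ _ lt_js) (natfun_lt _ _ lt_is); apply: (offX (Ordinal lt_is)).
move=> P; apply/mem_cpointsP/idP => [[i lt_is]|/XP[i Pi]].
  by rewrite natfun_lt => Pi; apply/XP; exists (Ordinal lt_is).
by exists i; rewrite ?natfunE.
Qed.

Lemma defines_of_redefines Xs Ls : redefines (@on_line k) s X Xs Ls ->
  defines_config type1s X (fun i : 'I_s => Xs i) (fun i : 'I_s => Ls i).
Proof.
case=> -[sizeX onX injL offX] XE; split.
- move=> P; rewrite -XE; split => [/mem_cpointsP[i lt_is Pi]|[i Pi]].
    by exists (Ordinal lt_is).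
  by apply/mem_cpointsP; exists i.
- by move=> i; apply: sizeX.
- by move=> i P; apply: onX.
- by move=> i j /injL E; apply: val_inj; apply: E.
- by move=> i j lt_ji P; apply: offX.
Qed.

End OrdinalIndexing.

Section ThreeCases.
Variables (k : fieldType) (s : nat) (X : seq (ppoint k)).
Variables (Xs : nat -> seq (ppoint k)) (Ls : nat -> pline k).
Hypotheses (gt1s : 1 < s) (uX : uniq X) (defX : redefines (@on_line k) s X Xs Ls).

Local Notation on := (@on_line k).
Local Notation on_uniq := (@on_line_uniq k).
Local Notation full_lines := (full_lines on (@line_through k)).
Local Notation mem_full_lines := (mem_full_lines on_uniq (@line_throughP k)).

Local Notation ls := (full_lines s X).
Let uls : uniq ls := uniq_full_lines _ _ _ _.

Lemma perm_config_pts : perm_eq X (cpoints s Xs).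
Proof. by apply: uniq_perm (uniq_cpoints defX.1) _ => // P; rewrite defX.2. Qed.

Lemma size_config_pts : 2 * size X = s * s.+1.
Proof. by rewrite (perm_size perm_config_pts); exact: size_cpoints defX.1. Qed.

Lemma full_lines_npts : {in ls, forall L, npts on X L = s}.
Proof. by move=> L; rewrite mem_full_lines // => /eqP. Qed.

Lemma lines_with_full_lines : lines_with X s ls.
Proof. by split=> // L; rewrite mem_full_lines //; split=> /eqP. Qed.

Lemma perm_full_lines_config : perm_eq ls (full_lines s (cpoints s Xs)).
Proof.
exact: perm_full_lines on_uniq (@line_throughP k) _ _ _ uX gt1s perm_config_pts.
Qed.

Lemma size_full_lines_config : size ls <= s.+1.
Proof.
rewrite (perm_size perm_full_lines_config).
exact: size_full_lines_le on_uniq (@line_throughP k) _ _ _ gt1s defX.1.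
Qed.

Lemma full_lines_gt0 : 0 < size ls.
Proof.
rewrite (perm_size perm_full_lines_config); case: s gt1s defX => // s' gt1s' [cfgX _].
have : Ls s' \in full_lines s'.+1 (cpoints s'.+1 Xs).
  by rewrite mem_full_lines ?(uniq_cpoints cfgX) ?(npts_cpoints_last cfgX).
by case: (full_lines _ _).
Qed.

Lemma case_all_meets : size ls = s.+1 -> forall P, P \in X <->
  exists L1 L2, [/\ L1 \in ls, L2 \in ls, L1 != L2, on P L1 & on P L2].
Proof.
move=> size_ls1; have size_ls : size ls = s \/ size ls = s.+1 by right.
have fullX := full_lines_npts; have sizeX := size_config_pts.
move=> P; split=> [PX|[L1 [L2 [L1ls L2ls L12 PL1 PL2]]]].
  have P2 := nlines_all2 on_uniq uX uls fullX sizeX size_ls size_ls1 PX.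
  by have [L1 [L2 []]] := exists_two_lines uls P2; exists L1, L2.
have [MX _ _] := meet_ptP on_uniq P uX uls fullX sizeX size_ls L1ls L2ls L12.
by rewrite (meet_pt_uniq on_uniq P uX uls fullX sizeX size_ls L1ls L2ls L12 PL1 PL2).
Qed.

Lemma case_lone_points : size ls = s ->
  exists (Xs' : 'I_s -> seq (ppoint k)) (Ls' : 'I_s -> pline k),
    [/\ defines_config type1s X Xs' Ls',
        (forall L, L \in ls <-> exists i, Ls' i = L) &
        (forall i, exists Pi : ppoint k,
           [/\ Pi \in X, on Pi (Ls' i),
               (forall j, j != i -> ~~ on Pi (Ls' j)) &
               (forall P, (P \in X /\ on P (Ls' i)) <->
                  (P = Pi \/ exists j, j != i /\ on P (Ls' i) /\ on P (Ls' j)))])].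
Proof.
move=> size_s; have size_ls : size ls = s \/ size ls = s.+1 by left.
set x0 := Ls 0; set L_ := line_at x0 ls.
have fullX := full_lines_npts; have sizeX := size_config_pts.
have lt_ls (i : 'I_s) : i < size ls by rewrite size_s.
have L_ls (i : 'I_s) : L_ i \in ls := line_at_mem x0 (lt_ls i).
have L_inj (i j : 'I_s) : (L_ i == L_ j) = (i == j) by rewrite line_at_inj.
have L_onto L : L \in ls -> exists i : 'I_s, L_ i = L.
  move=> Lls; have lt_L : index L ls < s by rewrite -[s in _ < s]size_s index_mem.
  by exists (Ordinal lt_L); rewrite /L_ /line_at nth_index.
exists (fun i : 'I_s => lone_pts on x0 X ls i), (fun i : 'I_s => L_ i); split.
- apply: defines_of_redefines.
  by have := lone_config on_uniq x0 uX uls fullX sizeX size_ls size_s.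
- by move=> L; split=> [/L_onto|[i <-]].
move=> i; exists (lone_pt on x0 X ls (L_ i)).
have [PX Pi P1] := lone_ptP on_uniq x0 uX uls fullX sizeX size_ls size_s (L_ls i).
split=> //.
  move=> j ji; apply/negP => Pj.
  by have /eqP := nlines1_on_uniq P1 (L_ls i) (L_ls j) Pi Pj; rewrite L_inj eq_sym (negbTE ji).
move=> P; split=> [[PX' PLi]|[->|[j [ji [PLi PLj]]]]] //.
  case: (nlines_1or2 on_uniq uX uls fullX sizeX size_ls PX') => [P1'|P2'].
    by left; apply: (lone_pt_uniq on_uniq x0 uX uls fullX sizeX size_ls size_s (L_ls i)).
  right; have [L1 [L2 [L1ls L2ls L12 PL1 PL2]]] := exists_two_lines uls P2'.
  have [iL|iL] :=
    on_third_line on_uniq uX uls fullX sizeX size_ls PX' L1ls L2ls (L_ls i) L12 PL1 PL2 PLi.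
  - by have [j jL2] := L_onto L2 L2ls; exists j; rewrite -L_inj jL2 iL eq_sym.
  - by have [j jL1] := L_onto L1 L1ls; exists j; rewrite -L_inj jL1 iL.
have ij : L_ i != L_ j by rewrite L_inj eq_sym.
have [MX _ _] := meet_ptP on_uniq x0 uX uls fullX sizeX size_ls (L_ls i) (L_ls j) ij.
split=> //.
by rewrite (meet_pt_uniq on_uniq x0 uX uls fullX sizeX size_ls (L_ls i) (L_ls j) ij PLi PLj).
Qed.

Lemma case_few_full_lines : size ls < s ->
  exists (Xs' : 'I_s -> seq (ppoint k)) (Ls' : 'I_s -> pline k),
    defines_config type1s X Xs' Ls' /\
    (forall i : 'I_s, val i = 0 -> forall P, P \in Xs' i -> forall L, L \in ls -> ~~ on P L).
Proof.
move=> few; have few' : size (full_lines s (cpoints s Xs)) < s.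
  by rewrite -(perm_size perm_full_lines_config).
have [Xs' [Ls' [[cfg' sameX'] off']]] :=
  redefine_few_full_lines on_uniq (@line_throughP k) gt1s defX.1 few'.
exists (fun i : 'I_s => Xs' i), (fun i : 'I_s => Ls' i); split.
  by apply: defines_of_redefines; split=> // P; rewrite sameX' defX.2.
move=> i /= i0 P; rewrite i0 => P0 L Lls; apply: off' P0 _.
by rewrite -(perm_mem perm_full_lines_config).
Qed.

End ThreeCases.

Local Open Scope ring_scope.

Theorem lemma4p1 (k : closedFieldType) (s : nat) (X : seq (ppoint k)) :
  (2 <= s)%N -> is_kconfig s type1s X ->
  exactly_one3
    (* (i) *)
    (exists ls : seq (pline k),
        lines_with X s ls /\ size ls = s.+1 /\
        (forall P, P \in X <->
           exists L1 L2, [/\ L1 \in ls, L2 \in ls, L1 != L2,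
                             on_line P L1 & on_line P L2]))
    (* (ii) *)
    (exists ls : seq (pline k),
        lines_with X s ls /\ size ls = s /\
        exists (Xs : 'I_s -> seq (ppoint k)) (Ls : 'I_s -> pline k),
          [/\ defines_config type1s X Xs Ls,
              (forall L, L \in ls <-> exists i, Ls i = L) &
              (forall i, exists Pi : ppoint k,
                 [/\ Pi \in X, on_line Pi (Ls i),
                     (forall j, j != i -> ~~ on_line Pi (Ls j)) &
                     (forall P, (P \in X /\ on_line P (Ls i)) <->
                        (P = Pi \/ exists j, j != i /\
                            on_line P (Ls i) /\ on_line P (Ls j)))])])
    (* (iii) *)
    (exists (r : nat) (ls : seq (pline k)),
        [/\ (1 <= r < s)%N, lines_with X s ls, size ls = r &
        exists (Xs : 'I_s -> seq (ppoint k)) (Ls : 'I_s -> pline k),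
          defines_config type1s X Xs Ls /\
          (forall (i : 'I_s), val i = 0%N ->
             forall P, P \in Xs i -> forall L, L \in ls -> ~~ on_line P L)]).
Proof.
move=> gt1s [uX [_ [Xs [Ls defX]]]].
have redefX := redefines_of_defines (Ls (Ordinal (ltnW gt1s))) defX.
have le_s1 := size_full_lines_config gt1s uX redefX.
set ls := full_lines (@on_line k) (@line_through k) s X in le_s1 *.
have size_lw ls' : lines_with X s ls' -> size ls' = size ls.
  case=> uls' ls'P.
  exact: size_lines_with (@on_line_uniq k) (@line_throughP k) _ _ _ uX gt1s uls' ls'P.
have lw : lines_with X s ls := lines_with_full_lines gt1s uX.
apply: exactly_one3_intro.
- move=> [ls1 [/size_lw size1 [sz1 _]]]; split.
    by move=> [ls2 [/size_lw size2 [sz2 _]]]; lia.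
  by move=> [r [ls2 [/andP[_ lt_rs] /size_lw size2 sz2 _]]]; lia.
- by move=> [ls1 [/size_lw size1 [sz1 _]]] [r [ls2 [/andP[_ lt_rs] /size_lw size2 sz2 _]]]; lia.
case: (ltngtP (size ls) s) => [few|many|eq_s].
- right; right; exists (size ls), ls; split=> //.
    by rewrite few (full_lines_gt0 gt1s uX redefX).
  by have := case_few_full_lines gt1s uX redefX few.
- have size_s1 : size ls = s.+1 by apply/anti_leq/andP; split; [exact: le_s1 | exact: many].
  by left; exists ls; split=> //; split=> //; have := case_all_meets gt1s uX redefX size_s1.
- by right; left; exists ls; split=> //; split=> //; have := case_lone_points gt1s uX redefX eq_s.
Qed.
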